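(* Let $\mathcal{P}$ be a finite set of propositional variables, let $S \subset (2^{\mathcal{P}})^\ast \times \{0,1\}$ be a finite sample in which no trace carries both labels, let $\Omega$ assign a positive real weight to each trace of $S$ with $\sum_{(u,b)\in S}\Omega(u)=1$, and let $\kappa\in[0,1]$. Consider the procedure (Algorithm 1) that, for $n=1,2,3,\dots$ in increasing order, computes an $\mathrm{LTL}_f$ formula $\varphi_n$ of size $n$ that minimizes the weighted loss $wl(S,\varphi,\Omega)$ among all $\mathrm{LTL}_f$ formulas $\varphi$ of size $n$, and returns the first $\varphi_n$ with $wl(S,\varphi_n,\Omega)\le\kappa$. Then this procedure terminates, and the returned formula $\varphi$ satisfies $wl(S,\varphi,\Omega)\le\kappa$ and is of minimal size among all $\mathrm{LTL}_f$ formulas $\psi$ with $wl(S,\psi,\Omega)\le\kappa$.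
   Context: A trace over $\mathcal{P}$ is a finite sequence $u=a_0a_1\dots a_m$ with $a_i\in 2^{\mathcal{P}}$. $\mathrm{LTL}_f$ formulas are built from propositions $p\in\mathcal{P}$ with the operators $\neg,\lor,\land,\rightarrow$, $\mathbf{X}$ (next), $\mathbf{U}$ (until), $\mathbf{F}$ (eventually, $\mathbf{F}\varphi=\mathit{true}\,\mathbf{U}\,\varphi$) and $\mathbf{G}$ (globally, $\mathbf{G}\varphi=\neg\mathbf{F}\neg\varphi$), interpreted over finite traces with the standard finite-trace semantics of De Giacomo and Vardi; $V(\varphi,u)\in\{0,1\}$ denotes whether trace $u$ satisfies $\varphi$ at position $0$. The size $|\varphi|$ of a formula is the number of its distinct subformulas. A sample is a finite set of pairs $(u,b)$ with $u$ a trace and $b\in\{0,1\}$ its label. The weighted loss is $wl(S,\varphi,\Omega)=\sum_{(u,b)\in S}\Omega(u)\,|V(\varphi,u)-b|$. *)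

From HB Require Import structures.
From mathcomp Require Import all_boot all_order all_algebra.
Set Implicit Arguments. Unset Strict Implicit. Unset Printing Implicit Defensive.
Import Order.TTheory GRing.Theory Num.Theory.

Inductive ltl (P : Type) : Type :=
  | Prop_ of P
  | Not of ltl P
  | Or of ltl P & ltl P
  | And of ltl P & ltl P
  | Impl of ltl P & ltl P
  | Next of ltl P
  | Until of ltl P & ltl P
  | Ev of ltl P
  | Glob of ltl P.

Section Eq.
Variable P : eqType.
Fixpoint ltl_eqb (f g : ltl P) : bool :=
  match f, g with
  | Prop_ p, Prop_ q => p == q
  | Not f1, Not g1 => ltl_eqb f1 g1
  | Or f1 f2, Or g1 g2 => ltl_eqb f1 g1 && ltl_eqb f2 g2
  | And f1 f2, And g1 g2 => ltl_eqb f1 g1 && ltl_eqb f2 g2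
  | Impl f1 f2, Impl g1 g2 => ltl_eqb f1 g1 && ltl_eqb f2 g2
  | Next f1, Next g1 => ltl_eqb f1 g1
  | Until f1 f2, Until g1 g2 => ltl_eqb f1 g1 && ltl_eqb f2 g2
  | Ev f1, Ev g1 => ltl_eqb f1 g1
  | Glob f1, Glob g1 => ltl_eqb f1 g1
  | _, _ => false
  end.

Lemma ltl_eqbP : Equality.axiom ltl_eqb.
Proof.
elim=> [p|f1 IH1|f1 IH1 f2 IH2|f1 IH1 f2 IH2|f1 IH1 f2 IH2|f1 IH1|f1 IH1 f2 IH2|f1 IH1|f1 IH1]
  [q|g1|g1 g2|g1 g2|g1 g2|g1|g1 g2|g1|g1] /=; try by constructor.
all: try (by apply: (iffP eqP) => [->|[]]).
all: try (by case: (IH1 g1) => [->|H]; constructor; [|case]).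
all: by case: (IH1 g1) => [->|H] /=; [case: (IH2 g2) => [->|H']|]; constructor; try case.
Qed.

HB.instance Definition _ := hasDecEq.Build (ltl P) ltl_eqbP.
End Eq.

Fixpoint subf (P : Type) (f : ltl P) : seq (ltl P) :=
  f :: match f with
       | Prop_ _ => [::]
       | Not g | Next g | Ev g | Glob g => subf g
       | Or g h | And g h | Impl g h | Until g h => subf g ++ subf h
       end.

Definition fsize (P : eqType) (f : ltl P) : nat := size (undup (subf f)).

Definition trace (P : finType) := seq {set P}.

(* Finite-trace semantics (De Giacomo & Vardi) at position i of u (i < size u). *)
Fixpoint holds (P : finType) (u : trace P) (f : ltl P) (i : nat) : bool :=
  match f with
  | Prop_ p => p \in nth set0 u i
  | Not g => ~~ holds u g i
  | Or g h => holds u g i || holds u h i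
  | And g h => holds u g i && holds u h i
  | Impl g h => holds u g i ==> holds u h i
  | Next g => (i.+1 < size u) && holds u g i.+1
  | Until g h =>
      has (fun j => holds u h j && all (fun k => holds u g k) (index_iota i j))
          (index_iota i (size u))
  | Ev g => has (fun j => holds u g j) (index_iota i (size u))
  | Glob g => all (fun j => holds u g j) (index_iota i (size u))
  end.

Definition V (P : finType) (f : ltl P) (u : trace P) : bool := holds u f 0.

Local Open Scope ring_scope.

Definition wl (R : numDomainType) (P : finType) (S : seq (trace P * bool))
    (f : ltl P) (Omega : trace P -> R) : R :=
  \sum_(ub <- S) Omega ub.1 * `|(V f ub.1)%:R - (ub.2)%:R|.

(* Since no trace carries both labels and all traces are nonempty, the
   disjunction over the positive traces u of a formula that pins down u
   letter by letter has loss 0 <= kappa.  Hence some size has a formula within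
   the threshold, the sizes at which the per-size minimizer is within it form a
   nonempty set of positive integers, and its least element N is where the
   procedure stops.  Any psi within the threshold has size n := fsize psi with
   wl (phi n) <= wl psi <= kappa, so N <= n.
   LTL_f has no constants, so true is written p -> p for a proposition p; one
   exists because phi 1 is a formula. *)

From mathcomp Require Import all_boot all_order all_algebra.
Import Order.TTheory GRing.Theory Num.Theory.

Set Implicit Arguments.
Unset Strict Implicit.
Unset Printing Implicit Defensive.

Fixpoint first_prop (P : Type) (f : ltl P) : P :=
  match f with
  | Prop_ p => p
  | Not g | Next g | Ev g | Glob g => first_prop g
  | Or g _ | And g _ | Impl g _ | Until g _ => first_prop g
  end.

Lemma fsize_gt0 (P : eqType) (f : ltl P) : (0 < fsize f)%N.
Proof.
have f_sub : f \in undup (subf f) by rewrite mem_undup; case: f => * /=; rewrite inE eqxx.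
by rewrite /fsize; case: (undup _) f_sub.
Qed.

Section CharacteristicFormula.

Variables (P : finType) (p0 : P).

Definition ltl_true : ltl P := Impl (Prop_ p0) (Prop_ p0).

Definition literal (a : {set P}) (p : P) : ltl P :=
  if p \in a then Prop_ p else Not (Prop_ p).

Definition letter_formula (a : {set P}) : ltl P :=
  foldr (fun p f => And (literal a p) f) ltl_true (enum P).

Fixpoint trace_formula (a : {set P}) (u : trace P) : ltl P :=
  match u with
  | [::] => And (letter_formula a) (Not (Next ltl_true))
  | b :: u' => And (letter_formula a) (Next (trace_formula b u'))
  end.

Definition sample_formula (S : seq (trace P * bool)) : ltl P :=
  foldr (@Or P) (Not ltl_true)
    [seq trace_formula (head set0 ub.1) (behead ub.1) | ub <- S & ub.2].

Lemma holds_letter_formula (v : trace P) a i :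
  holds v (letter_formula a) i = (nth set0 v i == a).
Proof.
have holds_foldr s : holds v (foldr (fun p f => And (literal a p) f) ltl_true s) i
    = all (fun p => (p \in nth set0 v i) == (p \in a)) s.
  elim: s => [|p s IHs] /=; first by rewrite implybb.
  by rewrite IHs /literal; case: (p \in a); rewrite /= ?eqb_id ?eqbF_neg.
rewrite holds_foldr; apply/allP/eqP => [same_at|->] //.
by apply/setP => p; apply/eqP/same_at; rewrite mem_enum.
Qed.

Lemma holds_trace_formula (v : trace P) u a i : (i < size v)%N ->
  holds v (trace_formula a u) i = (drop i v == a :: u).
Proof.
elim: u a i => [|b u IHu] a i lt_i_v /=;
  rewrite holds_letter_formula (drop_nth set0 lt_i_v) eqseq_cons; congr (_ && _).
  by rewrite implybb andbT -size_eq0 size_drop subn_eq0 -leqNgt.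
by case: ltnP => [lt_Si_v|le_v_Si] /=; [rewrite IHu | rewrite drop_oversize].
Qed.

Lemma holds_sample_formula (S : seq (trace P * bool)) (v : trace P) :
  (0 < size v)%N -> (forall ub, ub \in S -> (0 < size ub.1)%N) ->
  holds v (sample_formula S) 0 = has (fun ub => ub.2 && (v == ub.1)) S.
Proof.
move=> v_gt0; rewrite /sample_formula.
elim: S => [|[u b] S IHS] S_gt0 /=; first by rewrite implybb.
rewrite -IHS => [|ub S_ub]; last by apply: S_gt0; rewrite inE S_ub orbT.
move: (S_gt0 (u, b) (mem_head _ _)) => {S_gt0 IHS} /=.
by case: b; case: u => //= a u _; rewrite holds_trace_formula // drop0.
Qed.

End CharacteristicFormula.

Local Open Scope ring_scope.

Lemma wl_eq0 (R : numDomainType) (P : finType) (S : seq (trace P * bool))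
    (f : ltl P) (Omega : trace P -> R) :
  (forall u b, (u, b) \in S -> V f u = b) -> wl S f Omega = 0.
Proof.
move=> f_fits; rewrite /wl big1_seq // => -[u b] /= S_ub.
by rewrite (f_fits u b S_ub) subrr normr0 mulr0.
Qed.

Lemma wl_sample_formula (R : numDomainType) (P : finType) (p0 : P)
    (S : seq (trace P * bool)) (Omega : trace P -> R) :
  (forall ub, ub \in S -> (0 < size ub.1)%N) ->
  (forall u, (u, true) \in S -> (u, false) \notin S) ->
  wl S (sample_formula p0 S) Omega = 0.
Proof.
move=> S_gt0 S_consistent; apply: wl_eq0 => u b S_ub.
rewrite /V holds_sample_formula //; last exact: (S_gt0 (u, b)).
case: b S_ub => S_ub; first by apply/hasP; exists (u, true); rewrite //= eqxx.
apply/negbTE/hasP => -[[w []] // S_w /= /eqP eq_uw].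
by move: (S_consistent w S_w); rewrite -eq_uw S_ub.
Qed.

Section FirstMinimizerBelow.

Variables (T : Type) (R : realDomainType).
Variables (sz : T -> nat) (loss : T -> R) (kappa : R) (phi : nat -> T).
Hypothesis sz_gt0 : forall x, (0 < sz x)%N.
Hypothesis phi_min : forall n, (1 <= n)%N ->
  sz (phi n) = n /\ (forall x, sz x = n -> loss (phi n) <= loss x).

Lemma first_minimizer_below (x0 : T) : loss x0 <= kappa ->
  exists N : nat,
    [/\ (1 <= N)%N,
        (forall m, (1 <= m < N)%N -> kappa < loss (phi m)),
        loss (phi N) <= kappa &
        forall x, loss x <= kappa -> (sz (phi N) <= sz x)%N].
Proof.
have phi_below x : loss x <= kappa -> loss (phi (sz x)) <= kappa.
  by move=> x_below; apply: le_trans x_below; exact: (phi_min (sz_gt0 x)).2.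
move=> /phi_below x0_below.
have ex_below : exists n, (1 <= n)%N && (loss (phi n) <= kappa).
  by exists (sz x0); rewrite sz_gt0.
case: (ex_minnP ex_below) => N /andP[N_gt0 N_below] N_least.
exists N; split=> // [m /andP[m_gt0 lt_mN] | x /phi_below x_below].
  rewrite ltNge; apply: contraTN lt_mN => m_below.
  by rewrite -leqNgt N_least // m_gt0.
by rewrite (phi_min N_gt0).1 N_least // sz_gt0.
Qed.

End FirstMinimizerBelow.

Theorem theorem1 (R : realFieldType) (P : finType)
    (S : seq (trace P * bool)) (Omega : trace P -> R) (kappa : R)
    (phi : nat -> ltl P) :
  uniq S ->
  (forall ub, ub \in S -> (0 < size ub.1)%N) ->
  (forall u, (u, true) \in S -> (u, false) \notin S) ->
  (forall ub, ub \in S -> 0 < Omega ub.1) ->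
  \sum_(ub <- S) Omega ub.1 = 1 ->
  0 <= kappa <= 1 ->
  (forall n, (1 <= n)%N ->
     fsize (phi n) = n /\
     (forall psi : ltl P, fsize psi = n -> wl S (phi n) Omega <= wl S psi Omega)) ->
  exists N : nat,
    [/\ (1 <= N)%N,
        (forall m, (1 <= m < N)%N -> kappa < wl S (phi m) Omega),
        wl S (phi N) Omega <= kappa &
        forall psi : ltl P, wl S psi Omega <= kappa -> (fsize (phi N) <= fsize psi)%N].
Proof.
(* The loss of the characteristic formula is 0 whatever the weights, so only
   kappa >= 0 is used. *)
move=> _ S_gt0 S_consistent _ _ /andP[kappa_ge0 _] phi_min.
apply: (first_minimizer_below (@fsize_gt0 _) phi_min
  (x0 := sample_formula (first_prop (phi 1%N)) S)).
by rewrite wl_sample_formula.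
Qed.
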